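(* Let $\mathfrak g_1,\mathfrak g_2$ be finite-dimensional complex Lie algebras. Then the Jordan–Kronecker invariants of $\mathfrak g_1\oplus\mathfrak g_2$ are the union (as multisets of Jordan tuples and Kronecker sizes) of the Jordan–Kronecker invariants of $\mathfrak g_1$ and of $\mathfrak g_2$; in particular Jordan tuples coming from $\mathfrak g_1$ and from $\mathfrak g_2$ correspond to different eigenvalues.
   Context: For a finite-dimensional complex Lie algebra $\mathfrak g$ and $x\in\mathfrak g^*$, let $\mathcal A_x$ be the skew form $(\xi,\eta)\mapsto\langle x,[\xi,\eta]\rangle$ on $\mathfrak g$. By the Jordan–Kronecker theorem, a pair of skew forms $A,B$ on a finite-dimensional complex vector space admits a basis in which both are block-diagonal with blocks of the types: Jordan $2n\times2n$ block with eigenvalue $\mu$ ($A_i=\begin{pmatrix}0&J_\mu\\-J_\mu^T&0\end{pmatrix}$, $B_i=\begin{pmatrix}0&I_n\\-I_n&0\end{pmatrix}$), Jordan block with eigenvalue $\infty$ (roles of $A_i,B_i$ swapped), or Kronecker $(2k-1)\times(2k-1)$ block ($k\ge1$; $A_i=\begin{pmatrix}0&P\\-P^T&0\end{pmatrix}$, $B_i=\begin{pmatrix}0&Q\\-Q^T&0\end{pmatrix}$, $P=(I_{k-1}|0)$, $Q=(0|I_{k-1})$); block numbers and sizes grouped by eigenvalue are unique. For $(x,a)$ in a nonempty Zariski open subset of $\mathfrak g^*\times\mathfrak g^*$ the pair $(\mathcal A_x,\mathcal A_a)$ has the same Kronecker sizes $2k_1-1,\dots,2k_q-1$ and the same multiset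 of Jordan tuples $J_{\lambda_i}(2n_{i1},\dots,2n_{is_i})$ (for each distinct eigenvalue $\lambda_i$, the sizes of the Jordan blocks with that eigenvalue, $n_{i1}\ge\dots\ge n_{is_i}$; the eigenvalues depend on $(x,a)$ and are regarded as distinct formal symbols). These are the Jordan–Kronecker (JK) invariants of $\mathfrak g$. *)

From HB Require Import structures.
From mathcomp Require Import all_boot all_algebra.
From mathcomp Require Import complex.
From mathcomp Require Import reals.
From mathcomp Require mpoly.

Set Implicit Arguments.
Unset Strict Implicit.
Unset Printing Implicit Defensive.

Import GRing.Theory.
Local Open Scope ring_scope.

Section JK.
Variable F : fieldType.

(* A Lie algebra of dimension n, given by structure constants in a basis
   e_0..e_{n-1}:  [e_i, e_j] = \sum_k c i j k e_k. *)
Definition struct_consts (n : nat) := 'I_n -> 'I_n -> 'I_n -> F.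

Definition is_lie_sc (n : nat) (c : struct_consts n) : Prop :=
  (forall i k, c i i k = 0) /\
  (forall i j k, c i j k = - c j i k) /\
  (* Jacobi: [[e_i,e_j],e_l] + [[e_j,e_l],e_i] + [[e_l,e_i],e_j] = 0 *)
  (forall i j l m,
     \sum_(k < n) (c i j k * c k l m + c j l k * c k i m + c l i k * c k j m)
     = 0).

Definition dsum_sc (n1 n2 : nat) (c1 : struct_consts n1) (c2 : struct_consts n2)
  : struct_consts (n1 + n2) :=
  fun i j k =>
    match split i, split j, split k with
    | inl i', inl j', inl k' => c1 i' j' k'
    | inr i', inr j', inr k' => c2 i' j' k'
    | _, _, _ => 0
    end.

(* x in g^* given by its coordinates in the dual basis;
   A_x (xi, eta) = <x, [xi, eta]>, as a Gram matrix in the basis e. *)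
Definition skew_form (n : nat) (c : struct_consts n) (x : 'I_n -> F) : 'M[F]_n :=
  \matrix_(i, j) \sum_(k < n) x k * c i j k.

(* JordanB mu n : Jordan 2n x 2n block with eigenvalue mu (n >= 1)
   JordanInf n  : Jordan 2n x 2n block with eigenvalue infinity (n >= 1)
   KronB k      : Kronecker (2k-1) x (2k-1) block (k >= 1) *)
Inductive jk_block := JordanB of F & nat | JordanInf of nat | KronB of nat.

Definition jk_block_valid (b : jk_block) : bool :=
  match b with JordanB _ n => 0 < n | JordanInf n => 0 < n | KronB k => 0 < k end%N.

Definition jordan_mx (mu : F) (n : nat) : 'M[F]_n :=
  \matrix_(i, j) ((i == j)%:R * mu + (j == i.+1 :> nat)%:R).

Definition skew_pair (p q : nat) (M : 'M[F]_(p, q)) : 'M[F]_(p + q) :=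
  block_mx 0 M (- M^T) 0.

Definition kronP (k : nat) : 'M[F]_(k.-1, k) := \matrix_(i, j) (i == j :> nat)%:R.
Definition kronQ (k : nat) : 'M[F]_(k.-1, k) := \matrix_(i, j) (j == i.+1 :> nat)%:R.

Definition mxpair := {m : nat & ('M[F]_m * 'M[F]_m)%type}.

Definition block_pair (b : jk_block) : mxpair :=
  match b with
  | JordanB mu n => existT _ (n + n) (skew_pair (jordan_mx mu n), skew_pair 1%:M)
  | JordanInf n => existT _ (n + n) (skew_pair 1%:M, skew_pair (jordan_mx 0 n))
  | KronB k => existT _ (k.-1 + k) (skew_pair (kronP k), skew_pair (kronQ k))
  end.

Fixpoint bdiag (s : seq jk_block) : mxpair :=
  match s with
  | [::] => existT _ 0%N (0, 0)
  | b :: s' =>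
      let: existT m1 (A1, B1) := block_pair b in
      let: existT m2 (A2, B2) := bdiag s' in
      existT _ (m1 + m2)%N (block_mx A1 0 0 A2, block_mx B1 0 0 B2)
  end.

Definition jk_form (n : nat) (A B : 'M[F]_n) (s : seq jk_block) : Prop :=
  all jk_block_valid s /\
  exists (P : 'M[F]_n) (e : projT1 (bdiag s) = n),
    [/\ P \in unitmx,
        P^T *m A *m P = castmx (e, e) (projT2 (bdiag s)).1 &
        P^T *m B *m P = castmx (e, e) (projT2 (bdiag s)).2].

Definition kron_size (b : jk_block) : option nat :=
  if b is KronB k then Some (k.*2).-1 else None.
Definition kron_sizes (s : seq jk_block) : seq nat := pmap kron_size s.

(* Jordan blocks: (eigenvalue, size 2n); eigenvalue None stands for infinity *)
Definition jordan_data (b : jk_block) : option (option F * nat) :=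
  match b with
  | JordanB mu n => Some (Some mu, n.*2)
  | JordanInf n => Some (None, n.*2)
  | KronB _ => None
  end.

Definition jordan_eigs (s : seq jk_block) : seq (option F) :=
  undup [seq p.1 | p <- pmap jordan_data s].

Definition jordan_tuple (s : seq jk_block) (e : option F) : seq nat :=
  sort geq [seq p.2 | p <- pmap jordan_data s & p.1 == e].

(* one tuple per distinct eigenvalue (eigenvalues themselves forgotten) *)
Definition jordan_tuples (s : seq jk_block) : seq (seq nat) :=
  [seq jordan_tuple s e | e <- jordan_eigs s].

(* P holds on a nonempty Zariski-open subset of F^m; the open set is the
   complement of the common zero locus of the finite family S. *)
Definition holds_on_nonempty_zopen (m : nat) (P : ('I_m -> F) -> Prop) : Prop :=
  exists S : seq (mpoly.mpoly m F),
    (exists v : 'I_m -> F, has (fun p => mpoly.meval v p != 0) S) /\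
    (forall v : 'I_m -> F, has (fun p => mpoly.meval v p != 0) S -> P v).

(* (K, J) are the Jordan--Kronecker invariants of the Lie algebra with
   structure constants c: for (x, a) in a nonempty Zariski-open subset of
   g^* x g^* (coordinates v = (x, a)), the pair (A_x, A_a) has Kronecker
   sizes K and multiset of Jordan tuples J (both as multisets). *)
Definition JK_invariants (n : nat) (c : struct_consts n)
  (K : seq nat) (J : seq (seq nat)) : Prop :=
  holds_on_nonempty_zopen
    (fun v : 'I_(n + n) -> F =>
       exists s : seq jk_block,
         [/\ jk_form (skew_form c (fun i => v (lshift n i)))
                     (skew_form c (fun i => v (rshift n i))) s,
             perm_eq (kron_sizes s) K &
             perm_eq (jordan_tuples s) J]).

End JK.

(* At a point (x, a) = ((x1, x2), (a1, a2)) both forms of the direct sum are block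
   diagonal, so concatenating Jordan-Kronecker bases of the two summands gives one of the
   sum, and the invariants add up, provided the summands share no eigenvalue.  Choosing
   r_i = n_i - #Kronecker blocks of g_i, the rank of A_{x_i} - t A_{a_i} is r_i except
   at eigenvalues t.  Hence a nonzero r_1-minor of A_{a_1} excludes the eigenvalue
   infinity, and every finite common eigenvalue is a common root of the corresponding
   r_i-minors of the two pencils, which a nonzero resultant forbids.  This Zariski-open
   condition is nonempty: moving a_i along x_i makes A_{a_i} generic, and moving x_2
   along a_2 translates the spectrum of g_2 away from the finitely many eigenvalues of
   g_1. *)

From HB Require Import structures.
From mathcomp Require Import all_boot all_algebra.
From mathcomp Require Import complex reals mpoly.
From mathcomp Require Import ring zify.

Set Implicit Arguments.
Unset Strict Implicit.
Unset Printing Implicit Defensive.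

Import GRing.Theory.
Local Open Scope ring_scope.

Section BlockDiagonal.
Variable F : fieldType.
Implicit Types s : seq (jk_block F).

Lemma bdiag_cons (b : jk_block F) s : bdiag (b :: s) =
  existT _ (projT1 (block_pair b) + projT1 (bdiag s))%N
   (block_mx (projT2 (block_pair b)).1 0 0 (projT2 (bdiag s)).1,
    block_mx (projT2 (block_pair b)).2 0 0 (projT2 (bdiag s)).2).
Proof. by rewrite /=; case: (block_pair b) => m [A B]; case: (bdiag s) => m' [A' B']. Qed.

Lemma existT_castmx m m' (e : m = m') (A B : 'M[F]_m) :
  existT (fun k => ('M[F]_k * 'M[F]_k)%type) m' (castmx (e, e) A, castmx (e, e) B)
  = existT _ m (A, B).
Proof. by case: m' / e; rewrite !castmx_id. Qed.

Lemma block_mx0l m (A0 : 'M[F]_0) (A : 'M[F]_m) : block_mx A0 0 0 A = A :> 'M_(0 + m).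
Proof.
apply/matrixP=> i j; rewrite -(splitK i) -(splitK j).
case: (split i) => [[]//|i']; case: (split j) => [[]//|j'].
by rewrite block_mxEdr; congr (A _ _); apply: val_inj.
Qed.

Lemma bdiag_cat s1 s2 : bdiag (s1 ++ s2) =
  existT _ (projT1 (bdiag s1) + projT1 (bdiag s2))%N
   (block_mx (projT2 (bdiag s1)).1 0 0 (projT2 (bdiag s2)).1,
    block_mx (projT2 (bdiag s1)).2 0 0 (projT2 (bdiag s2)).2).
Proof.
elim: s1 => [|b s1 IH]; first by case: (bdiag s2) => m [A B] /=; rewrite !block_mx0l.
rewrite cat_cons !bdiag_cons IH /=.
case: (block_pair b) => mb [Ab Bb]; case: (bdiag s1) => m1 [A1 B1].
case: (bdiag s2) => m2 [A2 B2] /=.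
rewrite -[in RHS](existT_castmx (esym (addnA mb m1 m2))).
have block_diag3 (X Y Z : 'M[F]_ _) :
    block_mx X 0 0 (block_mx Y 0 0 Z) =
    castmx (esym (addnA mb m1 m2), esym (addnA mb m1 m2))
      (block_mx (block_mx X 0 0 Y) 0 0 Z).
  by have := @block_mxA F mb m1 m2 mb m1 m2 X 0 0 0 Y 0 0 0 Z; rewrite /= !row_mx0 !col_mx0.
by rewrite !block_diag3.
Qed.

Lemma jk_form_block_mx n1 n2 (A1 B1 : 'M[F]_n1) (A2 B2 : 'M[F]_n2) s1 s2 :
  jk_form A1 B1 s1 -> jk_form A2 B2 s2 ->
  jk_form (block_mx A1 0 0 A2) (block_mx B1 0 0 B2) (s1 ++ s2).
Proof.
case=> v1 [P1 [e1 [u1 hA1 hB1]]] [v2 [P2 [e2 [u2 hA2 hB2]]]].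
split; first by rewrite all_cat v1 v2.
rewrite bdiag_cat; move: e1 hA1 hB1 e2 hA2 hB2.
case: (bdiag s1) => m1 [X1 Y1]; case: (bdiag s2) => m2 [X2 Y2] /= e1 hA1 hB1 e2 hA2 hB2.
subst n1 n2; rewrite !castmx_id in hA1 hB1 hA2 hB2.
exists (block_mx P1 0 0 P2), erefl; rewrite !castmx_id tr_block_mx !trmx0.
rewrite !mulmx_block !(mul0mx, mulmx0, addr0, add0r) hA1 hB1 hA2 hB2; split=> //.
by rewrite unitmxE det_ublock unitrM -!unitmxE u1 u2.
Qed.

End BlockDiagonal.

Definition is_kron {F : fieldType} (b : jk_block F) : bool :=
  if b is KronB _ then true else false.

Definition jordan_block_of {F : fieldType} (e : option F) (b : jk_block F) : bool :=
  if jordan_data b is Some p then p.1 == e else false.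

Section Invariants.
Variable F : fieldType.
Implicit Types s : seq (jk_block F).

Lemma size_kron_sizes s : size (kron_sizes s) = count is_kron s.
Proof. by rewrite /kron_sizes size_pmap; apply: eq_count => -[]. Qed.

Lemma kron_sizes_cat s1 s2 : kron_sizes (s1 ++ s2) = kron_sizes s1 ++ kron_sizes s2.
Proof. exact: pmap_cat. Qed.

Lemma mem_jordan_eigs s e : (e \in jordan_eigs s) = has (jordan_block_of e) s.
Proof.
rewrite /jordan_eigs mem_undup; elim: s => [|b s IH] //=.
by case: b => [mu k|k|k] //=; rewrite inE IH eq_sym.
Qed.

Lemma filter_jordan_data_notin s e : e \notin jordan_eigs s ->
  [seq p <- pmap (@jordan_data F) s | p.1 == e] = [::].
Proof.
move=> e_notin; apply/eqP; rewrite -(negbK (_ == _)) -has_filter; apply/hasPn => p p_in.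
by apply: contra e_notin => /eqP <-; rewrite /jordan_eigs mem_undup map_f.
Qed.

Lemma jordan_tuples_cat s1 s2 :
    (forall e, e \in jordan_eigs s1 -> e \notin jordan_eigs s2) ->
  jordan_tuples (s1 ++ s2) = jordan_tuples s1 ++ jordan_tuples s2.
Proof.
move=> disj.
have eigs_cat : jordan_eigs (s1 ++ s2) = jordan_eigs s1 ++ jordan_eigs s2.
  rewrite /jordan_eigs pmap_cat map_cat undup_cat; congr (_ ++ _).
  by apply/all_filterP/allP => e e1 /=; have := disj e e1; rewrite /jordan_eigs mem_undup.
rewrite /jordan_tuples eigs_cat map_cat; congr (_ ++ _); apply/eq_in_map => e e_in;
  rewrite /jordan_tuple pmap_cat filter_cat.
- by rewrite (filter_jordan_data_notin (disj e e_in)) cats0.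
- have e_notin1 : e \notin jordan_eigs s1 by apply: contraL e_in => /disj.
  by rewrite (filter_jordan_data_notin e_notin1).
Qed.

End Invariants.

Section Ranks.
Variable F : fieldType.
Implicit Types s : seq (jk_block F).

Lemma mxrank_mxsub m n m' n' (f : 'I_m' -> 'I_m) (g : 'I_n' -> 'I_n) (A : 'M[F]_(m, n)) :
  (\rank (mxsub f g A) <= \rank A)%N.
Proof.
rewrite mxsubrc rowsubE; apply: leq_trans (mxrankM_maxr _ _) _.
have -> : colsub g A = A *m colsub g 1%:M by rewrite mulmx_colsub mulmx1.
exact: mxrankM_maxl.
Qed.

Lemma mxsub_unit_mxrank m n r (f : 'I_r -> 'I_m) (g : 'I_r -> 'I_n) (A : 'M[F]_(m, n)) :
  mxsub f g A \in unitmx -> (r <= \rank A)%N.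
Proof. by move=> /mxrank_unit <-; apply: mxrank_mxsub. Qed.

Lemma exists_unit_mxsub m n r (A : 'M[F]_(m, n)) : \rank A = r ->
  exists f : {ffun 'I_r -> 'I_m}, exists g : {ffun 'I_r -> 'I_n}, mxsub f g A \in unitmx.
Proof.
move=> <-; have full : row_full (rowsub (maxrankfun A) A)^T.
  by rewrite /row_full mxrank_tr; apply: maxrowsub_free.
exists (finfun (maxrankfun A)), (finfun (fullrankfun full)); rewrite mxsub_ffun.
have := fullrowsub_unit full; rewrite -unitmx_tr.
by congr (_ \in unitmx); apply/matrixP => i j; rewrite !mxE.
Qed.

Lemma utrig_mx_unit n (M : 'M[F]_n) :
  (forall i j : 'I_n, (j < i)%N -> M i j = 0) -> (forall i, M i i != 0) ->
  M \in unitmx.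
Proof.
move=> utrig diag; rewrite -unitmx_tr unitmxE det_trig.
  by rewrite unitfE; apply/prodf_neq0 => i _; rewrite mxE.
by apply/is_trig_mxP => i j lt_ij; rewrite mxE utrig.
Qed.

Lemma mxrank_skew_pair p q (M : 'M[F]_(p, q)) : \rank (skew_pair M) = (\rank M).*2.
Proof.
pose Z : 'M[F]_(p + q, q + p) := block_mx 0 1%:M 1%:M 0.
have free_Z : row_free Z.
  rewrite -row_leq_rank; apply: leq_trans (mxrankM_maxl _ (block_mx 0 1%:M 1%:M 0)).
  rewrite mulmx_block !(mul0mx, mulmx0, mul1mx, add0r, addr0) -scalar_mx_block.
  by rewrite mxrank1.
rewrite -(mxrankMfree _ free_Z) /skew_pair /Z mulmx_block.
rewrite !(mul0mx, mulmx0, mulmx1, add0r, addr0) rank_diag_block_mx.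
by rewrite mxrank_opp mxrank_tr addnn.
Qed.

Lemma skew_pairB p q (M N : 'M[F]_(p, q)) l :
  skew_pair M - l *: skew_pair N = skew_pair (M - l *: N).
Proof.
rewrite /skew_pair scale_block_mx opp_block_mx add_block_mx !(scaler0, oppr0, addr0).
rewrite linearB /= !scalerN opprK opprB; congr block_mx.
by rewrite linearZ addrC.
Qed.

Lemma jordan_mxB (mu l : F) n : jordan_mx mu n - l *: 1%:M = jordan_mx (mu - l) n.
Proof. by apply/matrixP => i j; rewrite !mxE; ring. Qed.

Lemma jordan_mx_unit (mu : F) n : mu != 0 -> jordan_mx mu n \in unitmx.
Proof.
move=> mu_neq0; apply: utrig_mx_unit => [i j lt_ji|i]; rewrite mxE.
  by rewrite -val_eqE (gtn_eqF lt_ji) (ltn_eqF (leqW lt_ji)) mul0r add0r.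
by rewrite eqxx (ltn_eqF (ltnSn i)) mul1r addr0.
Qed.

Lemma mxrank_jordan_mx0 n : \rank (jordan_mx (0 : F) n.+1) = n.
Proof.
have singular : jordan_mx (0 : F) n.+1 \notin unitmx.
  rewrite -unitmx_tr unitmxE det_trig.
    by rewrite big_ord_recl !mxE eqxx mulr0 add0r mul0r unitr0.
  apply/is_trig_mxP => i j lt_ij; rewrite !mxE mulr0 add0r.
  by rewrite (ltn_eqF (leqW lt_ij)).
apply/eqP; rewrite eqn_leq; apply/andP; split.
  by move: singular; rewrite -row_free_unit -ltnS ltn_neqAle rank_leq_row andbT.
apply: (@mxsub_unit_mxrank _ _ _ (widen_ord (leqnSn n)) (lift ord0)).
rewrite (_ : mxsub _ _ _ = 1%:M) ?unitmx1 //.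
by apply/matrixP => i j; rewrite !mxE /= mulr0 add0r /bump leq0n add1n eqSS eq_sym.
Qed.

Lemma mxrank_kron_pencil k l : \rank (kronP F k.+1 - l *: kronQ F k.+1) = k.
Proof.
apply/eqP; rewrite eqn_leq rank_leq_row /=.
apply: (@mxsub_unit_mxrank _ _ _ id (widen_ord (leqnSn k))).
apply: utrig_mx_unit => [i j lt_ji|i]; rewrite !mxE /=.
  by rewrite (gtn_eqF lt_ji) (ltn_eqF (leqW lt_ji)) mulr0 subr0.
by rewrite eqxx (ltn_eqF (ltnSn i)) mulr0 subr0 oner_eq0.
Qed.

Lemma mxrank_kronQ k : \rank (kronQ F k.+1) = k.
Proof.
apply/eqP; rewrite eqn_leq rank_leq_row /=.
apply: (@mxsub_unit_mxrank _ _ _ id (lift ord0)).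
rewrite (_ : mxsub _ _ _ = 1%:M) ?unitmx1 //.
by apply/matrixP => i j; rewrite !mxE /= /bump leq0n add1n eqSS eq_sym.
Qed.

Lemma mxrank_block_pair_pencil (b : jk_block F) (l : F) : jk_block_valid b ->
  (\rank ((projT2 (block_pair b)).1 - l *: (projT2 (block_pair b)).2)%R
    + is_kron b + (jordan_block_of (Some l) b).*2 = projT1 (block_pair b))%N.
Proof.
case: b => [mu [|n]|[|n]|[|k]] //= _; rewrite /jordan_block_of /= skew_pairB mxrank_skew_pair.
- rewrite jordan_mxB; have [->|neq_mu] := eqVneq mu l.
    by rewrite subrr mxrank_jordan_mx0 eqxx; lia.
  by rewrite mxrank_unit ?jordan_mx_unit ?subr_eq0 // (inj_eq Some_inj) (negbTE neq_mu); lia.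
- rewrite mxrank_unit; first lia.
  apply: utrig_mx_unit => [i j lt_ji|i]; rewrite !mxE.
    by rewrite -val_eqE (gtn_eqF lt_ji) (ltn_eqF (leqW lt_ji)) /=; ring.
  by rewrite eqxx (ltn_eqF (ltnSn i)) !(mulr0, mul0r, addr0, subr0) oner_eq0.
- by rewrite mxrank_kron_pencil; lia.
Qed.

Lemma mxrank_block_pair_B (b : jk_block F) : jk_block_valid b ->
  (\rank (projT2 (block_pair b)).2 + is_kron b + (jordan_block_of None b).*2
    = projT1 (block_pair b))%N.
Proof.
case: b => [mu [|n]|[|n]|[|k]] //= _; rewrite /jordan_block_of /= mxrank_skew_pair.
- by rewrite mxrank1; lia.
- by rewrite mxrank_jordan_mx0; lia.
- by rewrite mxrank_kronQ; lia.
Qed.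

Lemma mxrank_bdiag_pencil s (l : F) : all (@jk_block_valid F) s ->
  (\rank ((projT2 (bdiag s)).1 - l *: (projT2 (bdiag s)).2)%R
    + count is_kron s + (count (jordan_block_of (Some l)) s).*2 = projT1 (bdiag s))%N.
Proof.
elim: s => [|b s IH]; first by rewrite /= scaler0 subr0 mxrank0.
case/andP => valid_b valid_s; rewrite bdiag_cons /= scale_block_mx opp_block_mx.
rewrite add_block_mx !(scaler0, oppr0, addr0) rank_diag_block_mx.
have := mxrank_block_pair_pencil l valid_b; have := IH valid_s; rewrite doubleD; lia.
Qed.

Lemma mxrank_bdiag_B s : all (@jk_block_valid F) s ->
  (\rank (projT2 (bdiag s)).2 + count is_kron s + (count (jordan_block_of None) s).*2
    = projT1 (bdiag s))%N.
Proof.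
elim: s => [|b s IH]; first by rewrite /= mxrank0.
case/andP => valid_b valid_s; rewrite bdiag_cons /= rank_diag_block_mx.
have := mxrank_block_pair_B valid_b; have := IH valid_s; rewrite doubleD; lia.
Qed.

Lemma mxrank_congr n (P X : 'M[F]_n) : P \in unitmx -> \rank (P^T *m X *m P) = \rank X.
Proof.
move=> P_unit; rewrite mxrankMfree ?row_free_unit //.
by rewrite eqmxMfull // row_full_unit unitmx_tr.
Qed.

Lemma mxrank_castmx m n (e : m = n) (M : 'M[F]_m) : \rank (castmx (e, e) M) = \rank M.
Proof. by case: n / e; rewrite castmx_id. Qed.

Lemma jk_form_mxrank_pencil n (A B : 'M[F]_n) s (l : F) : jk_form A B s ->
  (\rank (A - l *: B)%R + count is_kron s + (count (jordan_block_of (Some l)) s).*2 = n)%N.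
Proof.
case=> valid [P [e [P_unit PA PB]]].
rewrite -(mxrank_congr (A - l *: B) P_unit) mulmxBr mulmxBl -scalemxAr -scalemxAl PA PB.
rewrite (_ : _ - _ = castmx (e, e) ((projT2 (bdiag s)).1 - l *: (projT2 (bdiag s)).2)).
  by rewrite mxrank_castmx mxrank_bdiag_pencil.
by case: n / e {A B P P_unit PA PB}; rewrite !castmx_id.
Qed.

Lemma jk_form_mxrank_B n (A B : 'M[F]_n) s : jk_form A B s ->
  (\rank B + count is_kron s + (count (jordan_block_of None) s).*2 = n)%N.
Proof.
case=> valid [P [e [P_unit _ PB]]].
by rewrite -(mxrank_congr B P_unit) PB mxrank_castmx mxrank_bdiag_B.
Qed.

Lemma jk_form_mxrank_regular n (A B : 'M[F]_n) s (l : F) : jk_form A B s ->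
  Some l \notin jordan_eigs s -> \rank (A - l *: B) = (n - count is_kron s)%N.
Proof.
move=> jkAB; rewrite mem_jordan_eigs has_count -leqNgt leqn0 => /eqP no_l.
by have := jk_form_mxrank_pencil l jkAB; rewrite no_l; lia.
Qed.

Section Minors.
Variables (n r : nat) (A B : 'M[F]_n) (s : seq (jk_block F)).
Variables (f g : 'I_r -> 'I_n).
Hypotheses (jkAB : jk_form A B s) (r_ge : (n <= r + count is_kron s)%N).

Lemma jk_form_no_infinite_eig :
  mxsub f g B \in unitmx -> (None : option F) \notin jordan_eigs s.
Proof.
move=> /mxsub_unit_mxrank; rewrite mem_jordan_eigs has_count -leqNgt.
by have := jk_form_mxrank_B jkAB; lia.
Qed.

Lemma jk_form_eig_minor_singular (mu : F) :
  Some mu \in jordan_eigs s -> \det (mxsub f g (A - mu *: B)) = 0.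
Proof.
rewrite mem_jordan_eigs has_count => has_mu; apply/eqP/negPn; rewrite -unitfE -unitmxE.
by apply/negP => /mxsub_unit_mxrank; have := jk_form_mxrank_pencil mu jkAB; lia.
Qed.

End Minors.

End Ranks.

Lemma size_prod_seq_leq (R : comNzRingType) (I : Type) (s : seq I) (G : I -> {poly R}) d :
  (forall i, size (G i) <= d.+1)%N -> (size (\prod_(i <- s) G i)%R <= (size s * d).+1)%N.
Proof.
move=> size_G; elim: s => [|i s IH]; first by rewrite big_nil size_poly1.
rewrite big_cons; apply: leq_trans (size_polyMleq _ _) _.
by have := size_G i; rewrite mulSn; set k := (size s * d)%N in IH *; lia.
Qed.

Lemma size_det_leq (R : comNzRingType) r d (M : 'M[{poly R}]_r) :
  (forall i j, size (M i j) <= d.+1)%N -> (size (\det M) <= (r * d).+1)%N.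
Proof.
move=> size_M; apply: leq_trans (size_sum _ _ _) _; apply/bigmax_leqP => s _.
rewrite size_Msign -[r in (_ <= (r * d).+1)%N]size_enum_ord enumT.
exact: size_prod_seq_leq.
Qed.

(* The library's [map_resultant] only covers morphisms out of a polynomial ring. *)
Lemma rmorph_resultant (aR rR : comNzRingType) (f : {rmorphism aR -> rR}) (p q : {poly aR}) :
    f (lead_coef p) != 0 -> f (lead_coef q) != 0 ->
  f (resultant p q) = resultant (map_poly f p) (map_poly f q).
Proof.
move=> nz_fp nz_fq; rewrite /resultant /Sylvester_mx !size_map_poly_id0 //.
rewrite -det_map_mx /= map_col_mx; congr (\det (col_mx _ _));
  by apply: map_lin1_mx => v; rewrite map_poly_rV rmorphM /= map_rVpoly.
Qed.

Lemma resultant_eq0P (F : closedFieldType) (p q : {poly F}) : p != 0 ->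
  reflect (exists x, root p x && root q x) (resultant p q == 0).
Proof.
move=> p_neq0; rewrite resultant_eq0; apply: (iffP idP) => [gcd_gt1|[x]].
  have /closed_rootP [x] : size (gcdp p q) != 1%N by rewrite gtn_eqF.
  by rewrite root_gcd; exists x.
rewrite -root_gcd => /root_size_gt1; apply; by rewrite gcdp_eq0 negb_and p_neq0.
Qed.

Section PencilDet.
Variable R : comNzRingType.

Definition pencil_det r (A B : 'M[R]_r) : {poly R} :=
  \det (map_mx polyC A - 'X *: map_mx polyC B).

Lemma size_pencil_det r (A B : 'M[R]_r) : (size (pencil_det A B) <= r.+1)%N.
Proof.
rewrite -[r in (_ <= r.+1)%N]muln1; apply: size_det_leq => i j; rewrite !mxE.
apply: leq_trans (size_polyD _ _) _; rewrite geq_max size_polyN.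
rewrite (leq_trans (size_polyC_leq1 _)) //=.
by rewrite mulrC mul_polyC (leq_trans (size_scale_leq _ _)) // size_polyX.
Qed.

Lemma horner_pencil_det r (A B : 'M[R]_r) l : (pencil_det A B).[l] = \det (A - l *: B).
Proof.
rewrite /pencil_det -horner_evalE -det_map_mx; congr (\det _).
by apply/matrixP => i j; rewrite !mxE /= horner_evalE hornerD hornerN hornerM hornerX !hornerC.
Qed.

End PencilDet.

Lemma map_pencil_det (R S : comNzRingType) (f : {rmorphism R -> S}) r (A B : 'M[R]_r) :
  map_poly f (pencil_det A B) = pencil_det (map_mx f A) (map_mx f B).
Proof.
rewrite /pencil_det -det_map_mx; congr (\det _).
by apply/matrixP => i j; rewrite !mxE rmorphB rmorphM /= !map_polyC map_polyX.
Qed.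

Lemma pencil_det_unit (F : fieldType) r (A B : 'M[F]_r) : B \in unitmx ->
  size (pencil_det A B) = r.+1 /\ (pencil_det A B)`_r != 0.
Proof.
move=> B_unit.
have -> : pencil_det A B = ((-1) ^+ r * \det B)%:P * char_poly (A *m invmx B).
  rewrite /pencil_det (_ : _ - _ = - (char_poly_mx (A *m invmx B) *m map_mx polyC B)).
    rewrite -scaleN1r detZ det_mulmx det_map_mx polyCM rmorphXn rmorphN1 /=.
    by rewrite -/(char_poly _); ring.
  rewrite /char_poly_mx mulmxBl -scalemx1 -scalemxAl mul1mx -map_mxM.
  by rewrite -mulmxA mulVmx // mulmx1 opprB.
have nz : (-1) ^+ r * \det B != 0 by rewrite mulf_neq0 ?signr_eq0 // -unitfE -unitmxE.
rewrite size_Cmul // size_char_poly coefCM mulf_neq0 //.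
have := char_poly_monic (A *m invmx B).
by rewrite monicE lead_coefE size_char_poly => /eqP ->; apply: oner_neq0.
Qed.

Lemma rmorph_lead_coef_pencil_det (R : comNzRingType) (F : fieldType)
    (f : {rmorphism R -> F}) r (A B : 'M[R]_r) :
  f (\det B) != 0 -> f (lead_coef (pencil_det A B)) != 0.
Proof.
rewrite -det_map_mx -unitfE -unitmxE => /(pencil_det_unit (map_mx f A)).
rewrite -map_pencil_det => -[size_fP coef_fP].
have size_P : size (pencil_det A B) = r.+1.
  apply/eqP; rewrite eqn_leq size_pencil_det -[X in (X <= _)%N]size_fP.
  by rewrite map_polyE (leq_trans (size_Poly _)) // size_map.
by rewrite lead_coefE size_P -coef_map.
Qed.

Lemma horner_pencil_det_shift (F : fieldType) r (A B : 'M[F]_r) s l :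
  (pencil_det (A + s *: B) B).[l] = (pencil_det A B).[l - s].
Proof. by rewrite !horner_pencil_det scalerBl opprB addrA. Qed.

Section ClosedField.
Variable F : closedFieldType.

Lemma exists_notin_seq (L : seq F) : exists t, t \notin L.
Proof.
have /closed_nonrootP [t] := monic_neq0 (monic_prod_XsubC L xpredT id).
by rewrite root_prod_XsubC; exists t.
Qed.

Lemma exists_seq_roots (p : {poly F}) :
  p != 0 -> exists L : seq F, forall t, root p t -> t \in L.
Proof.
move=> p_neq0; have [L def_p] := closed_field_poly_normal p; exists L => t.
by rewrite def_p rootZ ?lead_coef_eq0 // root_prod_XsubC.
Qed.

End ClosedField.

Lemma rmorph_meval (R S : comNzRingType) (f : {rmorphism R -> S}) k (v : 'I_k -> R)
    (p : {mpoly R[k]}) :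
  f p.@[v] = (map_mpoly f p).@[fun i => f (v i)].
Proof.
elim/mpolyind: p => [|c m p _ _ IH]; first by rewrite !raddf0.
rewrite !raddfD /= IH map_mpolyZ map_mpolyX -!mul_mpolyC !mevalM !mevalC !mevalX rmorphM /=.
by rewrite rmorph_prod; congr (_ * _ + _); apply: eq_bigr => i _; rewrite rmorphXn.
Qed.

Lemma meval_neq0_on_line (F : closedFieldType) k (p : {mpoly F[k]}) (u w : 'I_k -> F) :
  p.@[u] != 0 -> exists L : seq F, forall t, t \notin L -> p.@[fun j => u j + t * w j] != 0.
Proof.
move=> pu_neq0.
pose P := (map_mpoly polyC p).@[fun j => (u j)%:P + 'X * (w j)%:P].
have P_horner t : P.[t] = p.@[fun j => u j + t * w j].
  rewrite -horner_evalE rmorph_meval.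
  rewrite (_ : map_mpoly _ _ = p); last first.
    by apply/mpolyP => m; rewrite !mcoeff_map_mpoly /= horner_evalE hornerC.
  apply: meval_eq => j /=.
  by rewrite horner_evalE hornerD hornerM hornerX !hornerC mulrC.
have P_neq0 : P != 0.
  apply: contraNneq pu_neq0 => P0; have := P_horner 0; rewrite P0 horner0 => ->.
  by apply/eqP; apply: meval_eq => j; rewrite mul0r addr0.
have [L roots_P] := exists_seq_roots P_neq0; exists L => t.
by rewrite -P_horner; apply: contra => /eqP P_t; apply: roots_P; apply/eqP.
Qed.

Definition copair (T : Type) m n (x : 'I_m -> T) (a : 'I_n -> T) : 'I_(m + n) -> T :=
  fun j => match split j with inl i => x i | inr i => a i end.

Lemma copair_lshift (T : Type) m n (x : 'I_m -> T) (a : 'I_n -> T) i :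
  copair x a (lshift n i) = x i.
Proof. by rewrite /copair (unsplitK (inl _ i)). Qed.

Lemma copair_rshift (T : Type) m n (x : 'I_m -> T) (a : 'I_n -> T) i :
  copair x a (rshift m i) = a i.
Proof. by rewrite /copair (unsplitK (inr _ i)). Qed.

(* The row and column selections of an r-minor, as finite functions so that the minors
   of a given size form a finite type. *)
Notation minor r n := ({ffun 'I_r -> 'I_n} * {ffun 'I_r -> 'I_n})%type.

Section SkewFormPencil.
Variable F : fieldType.

Lemma skew_form_ext n (c : struct_consts F n) (u u' : 'I_n -> F) :
  u =1 u' -> skew_form c u = skew_form c u'.
Proof.
by move=> eq_u; apply/matrixP => i j; rewrite !mxE; apply: eq_bigr => k _; rewrite eq_u.
Qed.

Lemma skew_form_dsum n1 n2 (c1 : struct_consts F n1) (c2 : struct_consts F n2)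
    (x : 'I_(n1 + n2) -> F) :
  skew_form (dsum_sc c1 c2) x =
  block_mx (skew_form c1 (fun i => x (lshift n2 i))) 0 0
           (skew_form c2 (fun i => x (rshift n1 i))).
Proof.
have splitl m p (k : 'I_m) : split (lshift p k) = inl k := unsplitK (inl _ k).
have splitr m p (k : 'I_p) : split (rshift m k) = inr k := unsplitK (inr _ k).
apply/matrixP=> i j; rewrite -(splitK i) -(splitK j) mxE big_split_ord /= /dsum_sc !unsplitK.
case: (split i) => i'; case: (split j) => j' /=;
  rewrite ?block_mxEul ?block_mxEur ?block_mxEdl ?block_mxEdr ?mxE.
- rewrite [X in _ + X]big1 ?addr0 => [|k _]; last by rewrite splitr mulr0.
  by apply: eq_bigr => k _; rewrite splitl.
- by rewrite !big1 ?addr0 // => k _; rewrite ?splitl ?splitr mulr0.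
- by rewrite !big1 ?addr0 // => k _; rewrite ?splitl ?splitr mulr0.
- rewrite big1 ?add0r => [|k _]; last by rewrite splitl mulr0.
  by apply: eq_bigr => k _; rewrite splitr.
Qed.

Variables (n : nat) (c : struct_consts F n).

Definition skew_form_x (u : 'I_(n + n) -> F) := skew_form c (fun i => u (lshift n i)).
Definition skew_form_a (u : 'I_(n + n) -> F) := skew_form c (fun i => u (rshift n i)).

Definition jk_generic (K : seq nat) (J : seq (seq nat)) (u : 'I_(n + n) -> F) : Prop :=
  exists s : seq (jk_block F),
    [/\ jk_form (skew_form_x u) (skew_form_a u) s,
        perm_eq (kron_sizes s) K & perm_eq (jordan_tuples s) J].

Lemma JK_invariantsE K J : JK_invariants c K J = holds_on_nonempty_zopen (jk_generic K J).
Proof. by []. Qed.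

Lemma skew_form_x_copair x a : skew_form_x (copair x a) = skew_form c x.
Proof. by apply: skew_form_ext => i; rewrite copair_lshift. Qed.

Lemma skew_form_a_copair x a : skew_form_a (copair x a) = skew_form c a.
Proof. by apply: skew_form_ext => i; rewrite copair_rshift. Qed.

Lemma skew_form0 : skew_form c (fun _ => 0) = 0.
Proof. by apply/matrixP => i j; rewrite !mxE big1 // => k _; rewrite mul0r. Qed.

Lemma skew_form_comb (u w : 'I_n -> F) t :
  skew_form c (fun i => u i + t * w i) = skew_form c u + t *: skew_form c w.
Proof.
apply/matrixP => i j; rewrite !mxE mulr_sumr -big_split /=.
by apply: eq_bigr => k _; ring.
Qed.

Lemma skew_form_x_comb (u w : 'I_(n + n) -> F) t :
  skew_form_x (fun j => u j + t * w j) = skew_form_x u + t *: skew_form_x w.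
Proof. exact: skew_form_comb. Qed.

Lemma skew_form_a_comb (u w : 'I_(n + n) -> F) t :
  skew_form_a (fun j => u j + t * w j) = skew_form_a u + t *: skew_form_a w.
Proof. exact: skew_form_comb. Qed.

Variable r : nat.

Definition minor_unit_at (u : 'I_(n + n) -> F) (m : minor r n) : bool :=
  mxsub m.1 m.2 (skew_form_a u) \in unitmx.

Definition minor_pencil_at (u : 'I_(n + n) -> F) (m : minor r n) : {poly F} :=
  pencil_det (mxsub m.1 m.2 (skew_form_x u)) (mxsub m.1 m.2 (skew_form_a u)).

End SkewFormPencil.

Section GenericPoints.
Variables (F : closedFieldType) (n : nat) (c : struct_consts F n).

Lemma exists_point_unit_minor (p : {mpoly F[n + n]}) (u : 'I_(n + n) -> F) s :
    p.@[u] != 0 -> jk_form (skew_form_x c u) (skew_form_a c u) s ->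
  exists u' (m : minor (n - count is_kron s) n), p.@[u'] != 0 /\ minor_unit_at c u' m.
Proof.
move=> pu_neq0 jk_u.
pose w := copair (fun _ : 'I_n => 0) (fun i => u (lshift n i)).
have [L pL] := meval_neq0_on_line w pu_neq0.
have [t] := exists_notin_seq (0 :: [seq - mu^-1 | mu <- pmap id (jordan_eigs s)] ++ L).
rewrite inE mem_cat !negb_or => /and3P [t_neq0 t_notin_eigs t_notin_L].
have regular : Some (- t^-1) \notin jordan_eigs s.
  apply: contra t_notin_eigs => eig; apply/mapP; exists (- t^-1).
    by rewrite mem_pmap map_id.
  by rewrite invrN invrK opprK.
(* Moving a along x turns A_a into t (A_x + t^-1 A_a), regular unless -t^-1 is an eigenvalue. *)
have rank_a : \rank (t *: (skew_form_x c u - (- t^-1) *: skew_form_a c u))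
              = (n - count is_kron s)%N.
  by rewrite mxrank_scale_nz // (jk_form_mxrank_regular jk_u regular).
have [f [g minor_unit]] := exists_unit_mxsub rank_a.
exists (fun j => u j + t * w j), (f, g); split; first exact: pL.
rewrite /minor_unit_at skew_form_a_comb skew_form_a_copair -/(skew_form_x c u).
suff -> : skew_form_a c u + t *: skew_form_x c u
          = t *: (skew_form_x c u - (- t^-1) *: skew_form_a c u) by [].
by rewrite scalerBr scalerA mulrN mulrV ?unitfE // scaleN1r opprK addrC.
Qed.

Lemma exists_generic_unit_minor K J (S : seq {mpoly F[n + n]}) :
    (forall u, has (fun p => p.@[u] != 0) S -> jk_generic c K J u) ->
    (exists u, has (fun p => p.@[u] != 0) S) ->
  exists p u (m : minor (n - size K) n), [/\ p \in S, p.@[u] != 0 & minor_unit_at c u m].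
Proof.
move=> generic [u0 /[dup] /generic [s [jk_s kron_s _]] /hasP [p p_in pu0]].
rewrite -(perm_size kron_s) size_kron_sizes.
have [u [m [pu minor_unit]]] := exists_point_unit_minor pu0 jk_s.
by exists p, u, m.
Qed.

Lemma exists_shift_separating r (q : {mpoly F[n + n]}) (u : 'I_(n + n) -> F) (m : minor r n)
    (P : {poly F}) :
    P != 0 -> q.@[u] != 0 -> minor_unit_at c u m ->
  exists u', [/\ q.@[u'] != 0, minor_unit_at c u' m &
                 forall l, root P l -> ~~ root (minor_pencil_at c u' m) l].
Proof.
move=> P_neq0 qu_neq0 minor_unit.
have [RP roots_P] := exists_seq_roots P_neq0.
have [Ru roots_u] : exists R : seq F, forall l, root (minor_pencil_at c u m) l -> l \in R.
  by apply: exists_seq_roots; rewrite -size_poly_gt0 (pencil_det_unit _ minor_unit).1.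
(* Moving x along a by t keeps A_a and shifts the roots of the minor pencil by t. *)
pose w := copair (fun i => u (rshift n i)) (fun _ : 'I_n => 0).
have [L qL] := meval_neq0_on_line w qu_neq0.
have [t] := exists_notin_seq ([seq a - b | a <- RP, b <- Ru] ++ L).
rewrite mem_cat negb_or => /andP [t_notin_R t_notin_L].
have a_fixed : skew_form_a c (fun j => u j + t * w j) = skew_form_a c u.
  by rewrite skew_form_a_comb skew_form_a_copair skew_form0 scaler0 addr0.
exists (fun j => u j + t * w j); split; first exact: qL.
  by rewrite /minor_unit_at a_fixed.
move=> l /roots_P l_in; apply: contra t_notin_R => root_l.
apply/allpairsP; exists (l, l - t); split => //=; last by rewrite opprB addrC subrK.
apply: roots_u; move: root_l.
rewrite /root /minor_pencil_at a_fixed skew_form_x_comb skew_form_x_copair.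
by rewrite linearD linearZ /= horner_pencil_det_shift.
Qed.

End GenericPoints.

Lemma rmorph_resultant_pencil_det (R : comNzRingType) (F : fieldType)
    (f : {rmorphism R -> F}) r1 r2 (A1 B1 : 'M[R]_r1) (A2 B2 : 'M[R]_r2) :
    f (\det B1) != 0 -> f (\det B2) != 0 ->
  f (resultant (pencil_det A1 B1) (pencil_det A2 B2))
  = resultant (pencil_det (map_mx f A1) (map_mx f B1)) (pencil_det (map_mx f A2) (map_mx f B2)).
Proof.
by move=> B1_neq0 B2_neq0; rewrite rmorph_resultant ?rmorph_lead_coef_pencil_det ?map_pencil_det.
Qed.

Section FormalMinors.
Variables (F : fieldType) (n k : nat) (c : struct_consts F n).

Definition formal_skew_form (w : 'I_n -> 'I_k) : 'M[{mpoly F[k]}]_n :=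
  \matrix_(i, j) \sum_(l < n) 'X_(w l) * (c i j l)%:MP.

Lemma map_formal_skew_form (v : 'I_k -> F) w :
  map_mx (meval v) (formal_skew_form w) = skew_form c (v \o w).
Proof.
apply/matrixP => i j; rewrite !mxE raddf_sum /=; apply: eq_bigr => l _.
by rewrite mevalM mevalXU mevalC.
Qed.

Variables (r : nat) (w : 'I_(n + n) -> 'I_k).

Definition formal_minor_det (m : minor r n) : {mpoly F[k]} :=
  \det (mxsub m.1 m.2 (formal_skew_form (fun i => w (rshift n i)))).

Definition formal_minor_pencil (m : minor r n) : {poly {mpoly F[k]}} :=
  pencil_det (mxsub m.1 m.2 (formal_skew_form (fun i => w (lshift n i))))
             (mxsub m.1 m.2 (formal_skew_form (fun i => w (rshift n i)))).

Lemma map_mxsub_formal_skew_form (v : 'I_k -> F) (m : minor r n) (w' : 'I_n -> 'I_k) :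
  map_mx (meval v) (mxsub m.1 m.2 (formal_skew_form w')) = mxsub m.1 m.2 (skew_form c (v \o w')).
Proof. by rewrite -map_formal_skew_form; apply/matrixP => i j; rewrite !mxE. Qed.

Lemma meval_formal_minor_det_neq0 (v : 'I_k -> F) (m : minor r n) :
  ((formal_minor_det m).@[v] != 0) = minor_unit_at c (v \o w) m.
Proof. by rewrite /minor_unit_at unitmxE unitfE -map_mxsub_formal_skew_form det_map_mx. Qed.

End FormalMinors.

Lemma meval_resultant_formal_minor_pencil (F : fieldType) k n n' r r'
    (c : struct_consts F n) (c' : struct_consts F n')
    (w : 'I_(n + n) -> 'I_k) (w' : 'I_(n' + n') -> 'I_k) (m : minor r n) (m' : minor r' n')
    (v : 'I_k -> F) :
    minor_unit_at c (v \o w) m -> minor_unit_at c' (v \o w') m' ->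
  (resultant (formal_minor_pencil c w m) (formal_minor_pencil c' w' m')).@[v]
  = resultant (minor_pencil_at c (v \o w) m) (minor_pencil_at c' (v \o w') m').
Proof.
rewrite -!meval_formal_minor_det_neq0 => unit_m unit_m'.
by rewrite rmorph_resultant_pencil_det // !map_mxsub_formal_skew_form.
Qed.

Lemma jordan_eigs_separated (F : fieldType) n1 n2 r1 r2 (A1 B1 : 'M[F]_n1)
    (A2 B2 : 'M[F]_n2) s1 s2 (m1 : minor r1 n1) (m2 : minor r2 n2) :
    jk_form A1 B1 s1 -> jk_form A2 B2 s2 ->
    (n1 <= r1 + count is_kron s1)%N -> (n2 <= r2 + count is_kron s2)%N ->
    mxsub m1.1 m1.2 B1 \in unitmx ->
    (forall l, ~~ (root (pencil_det (mxsub m1.1 m1.2 A1) (mxsub m1.1 m1.2 B1)) l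
                   && root (pencil_det (mxsub m2.1 m2.2 A2) (mxsub m2.1 m2.2 B2)) l)) ->
  forall e, e \in jordan_eigs s1 -> e \notin jordan_eigs s2.
Proof.
move=> jk1 jk2 r1_ge r2_ge unit1 coprime [mu|] e1; last first.
  by rewrite (negbTE (jk_form_no_infinite_eig jk1 r1_ge unit1)) in e1.
apply: contra (coprime mu) => e2.
rewrite /root !horner_pencil_det -!linearZ -!linearB /=.
rewrite (jk_form_eig_minor_singular _ _ jk1 r1_ge e1).
by rewrite (jk_form_eig_minor_singular _ _ jk2 r2_ge e2) eqxx.
Qed.

Section DirectSum.
Variables (F : fieldType) (n1 n2 : nat).
Variables (c1 : struct_consts F n1) (c2 : struct_consts F n2).
Local Notation N := (n1 + n2)%N.

Definition coord1 : 'I_(n1 + n1) -> 'I_(N + N) :=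
  copair (fun i => lshift N (lshift n2 i)) (fun i => rshift N (lshift n2 i)).
Definition coord2 : 'I_(n2 + n2) -> 'I_(N + N) :=
  copair (fun i => lshift N (rshift n1 i)) (fun i => rshift N (rshift n1 i)).

Definition glue (u1 : 'I_(n1 + n1) -> F) (u2 : 'I_(n2 + n2) -> F) : 'I_(N + N) -> F :=
  copair (copair (fun i => u1 (lshift n1 i)) (fun i => u2 (lshift n2 i)))
         (copair (fun i => u1 (rshift n1 i)) (fun i => u2 (rshift n2 i))).

Lemma glue_coord1 u1 u2 : glue u1 u2 \o coord1 = u1.
Proof.
apply: boolp.funext => j; rewrite -(splitK j); case: (split j) => i /=;
  by rewrite /coord1 /glue ?(copair_lshift, copair_rshift).
Qed.

Lemma glue_coord2 u1 u2 : glue u1 u2 \o coord2 = u2.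
Proof.
apply: boolp.funext => j; rewrite -(splitK j); case: (split j) => i /=;
  by rewrite /coord2 /glue ?(copair_lshift, copair_rshift).
Qed.

Lemma skew_form_x_dsum v : skew_form_x (dsum_sc c1 c2) v =
  block_mx (skew_form_x c1 (v \o coord1)) 0 0 (skew_form_x c2 (v \o coord2)).
Proof.
rewrite /skew_form_x skew_form_dsum.
by congr block_mx; apply: skew_form_ext => i; rewrite /= /coord1 /coord2 copair_lshift.
Qed.

Lemma skew_form_a_dsum v : skew_form_a (dsum_sc c1 c2) v =
  block_mx (skew_form_a c1 (v \o coord1)) 0 0 (skew_form_a c2 (v \o coord2)).
Proof.
rewrite /skew_form_a skew_form_dsum.
by congr block_mx; apply: skew_form_ext => i; rewrite /= /coord1 /coord2 copair_rshift.
Qed.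

End DirectSum.

Arguments coord1 : clear implicits.
Arguments coord2 : clear implicits.

Definition rename_mpoly (R : comNzRingType) m k (w : 'I_m -> 'I_k) (p : {mpoly R[m]}) :
  {mpoly R[k]} := p \mPo [tuple 'X_(w i) | i < m].

Lemma meval_rename_mpoly (R : comNzRingType) m k (w : 'I_m -> 'I_k) (p : {mpoly R[m]}) v :
  (rename_mpoly w p).@[v] = p.@[v \o w].
Proof. by rewrite comp_mpoly_meval; apply: meval_eq => i; rewrite tnth_mktuple mevalXU. Qed.

Section DirectSumGeneric.
Variables (F : closedFieldType) (n1 n2 : nat).
Variables (c1 : struct_consts F n1) (c2 : struct_consts F n2).
Variables (K1 K2 : seq nat) (J1 J2 : seq (seq nat)).
Local Notation N := (n1 + n2)%N.
Local Notation r1 := (n1 - size K1)%N.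
Local Notation r2 := (n2 - size K2)%N.

Definition dsum_poly (p : {mpoly F[n1 + n1]}) (q : {mpoly F[n2 + n2]})
    (m : minor r1 n1 * minor r2 n2) : {mpoly F[N + N]} :=
  rename_mpoly (coord1 n1 n2) p * rename_mpoly (coord2 n1 n2) q
  * formal_minor_det c1 (coord1 n1 n2) m.1 * formal_minor_det c2 (coord2 n1 n2) m.2
  * resultant (formal_minor_pencil c1 (coord1 n1 n2) m.1)
              (formal_minor_pencil c2 (coord2 n1 n2) m.2).

Lemma meval_dsum_poly_neq0 p q m (v : 'I_(N + N) -> F) :
  let u1 := v \o coord1 n1 n2 in let u2 := v \o coord2 n1 n2 in
  ((dsum_poly p q m).@[v] != 0) =
  [&& p.@[u1] != 0, q.@[u2] != 0, minor_unit_at c1 u1 m.1, minor_unit_at c2 u2 m.2 &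
      resultant (minor_pencil_at c1 u1 m.1) (minor_pencil_at c2 u2 m.2) != 0].
Proof.
move=> u1 u2; rewrite !mevalM !mulf_eq0 !negb_or !meval_rename_mpoly.
rewrite !meval_formal_minor_det_neq0 -/u1 -/u2 -!andbA.
have [unit1|] := boolP (minor_unit_at c1 u1 m.1); last by rewrite !andbF.
have [unit2|] := boolP (minor_unit_at c2 u2 m.2); last by rewrite !andbF.
by rewrite meval_resultant_formal_minor_pencil.
Qed.

Variables (S1 : seq {mpoly F[n1 + n1]}) (S2 : seq {mpoly F[n2 + n2]}).
Hypothesis generic1 : forall u, has (fun p => p.@[u] != 0) S1 -> jk_generic c1 K1 J1 u.
Hypothesis generic2 : forall u, has (fun q => q.@[u] != 0) S2 -> jk_generic c2 K2 J2 u.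

Lemma dsum_poly_sound p q m v : p \in S1 -> q \in S2 -> (dsum_poly p q m).@[v] != 0 ->
  jk_generic (dsum_sc c1 c2) (K1 ++ K2) (J1 ++ J2) v.
Proof.
move=> p_in q_in; rewrite meval_dsum_poly_neq0 => /and5P [pv qv unit1 unit2 res].
have [s1 [jk1 kron1 jordan1]] : jk_generic c1 K1 J1 (v \o coord1 n1 n2).
  by apply: generic1; apply/hasP; exists p.
have [s2 [jk2 kron2 jordan2]] : jk_generic c2 K2 J2 (v \o coord2 n1 n2).
  by apply: generic2; apply/hasP; exists q.
have le1 : (n1 <= r1 + count is_kron s1)%N.
  by rewrite -size_kron_sizes (perm_size kron1) addnC -leq_subLR.
have le2 : (n2 <= r2 + count is_kron s2)%N.
  by rewrite -size_kron_sizes (perm_size kron2) addnC -leq_subLR.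
exists (s1 ++ s2); split.
- by rewrite skew_form_x_dsum skew_form_a_dsum; apply: jk_form_block_mx.
- by rewrite kron_sizes_cat perm_cat.
rewrite jordan_tuples_cat ?perm_cat //.
apply: (jordan_eigs_separated (m2 := m.2) jk1 jk2 le1 le2 unit1) => l.
apply: contra res => /andP [root1 root2]; apply/resultant_eq0P; last by exists l; rewrite root1.
by rewrite -size_poly_gt0 (pencil_det_unit _ unit1).1.
Qed.

Lemma exists_dsum_poly_neq0 :
    (exists u, has (fun p => p.@[u] != 0) S1) -> (exists u, has (fun q => q.@[u] != 0) S2) ->
  exists v p q m, [/\ p \in S1, q \in S2 & (dsum_poly p q m).@[v] != 0].
Proof.
move=> /(exists_generic_unit_minor generic1) [p [u1 [m1 [p_in pu1 unit1]]]].
move=> /(exists_generic_unit_minor generic2) [q [u2 [m2 [q_in qu2 unit2]]]].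
have P1_neq0 : minor_pencil_at c1 u1 m1 != 0.
  by rewrite -size_poly_gt0 (pencil_det_unit _ unit1).1.
have [u2' [qu2' unit2' separated]] := exists_shift_separating P1_neq0 qu2 unit2.
exists (glue u1 u2'), p, q, (m1, m2); split => //.
rewrite meval_dsum_poly_neq0 /= glue_coord1 glue_coord2 pu1 qu2' unit1 unit2' /=.
by apply/(resultant_eq0P _ P1_neq0) => -[l /andP [/separated/negP]].
Qed.

End DirectSumGeneric.

Lemma JK_invariants_dsum (F : closedFieldType) n1 n2 (c1 : struct_consts F n1)
    (c2 : struct_consts F n2) K1 K2 J1 J2 :
  JK_invariants c1 K1 J1 -> JK_invariants c2 K2 J2 ->
  JK_invariants (dsum_sc c1 c2) (K1 ++ K2) (J1 ++ J2).
Proof.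
rewrite !JK_invariantsE => -[S1 [ne1 generic1]] [S2 [ne2 generic2]].
pose minors := enum {: minor (n1 - size K1) n1 * minor (n2 - size K2) n2}.
exists [seq dsum_poly c1 c2 pq.1 pq.2 m | pq <- [seq (p, q) | p <- S1, q <- S2], m <- minors].
split.
  have [v [p [q [m [p_in q_in nz]]]]] := exists_dsum_poly_neq0 generic1 generic2 ne1 ne2.
  exists v; apply/hasP; exists (dsum_poly c1 c2 p q m) => //.
  exact: allpairs_f (allpairs_f pair p_in q_in) (mem_enum _ m).
move=> v /hasP [_ /allpairsP [[pq m] [/allpairsP [[p q] [p_in q_in ->]] _ ->]]].
exact: dsum_poly_sound generic1 generic2 _ _ _ _ p_in q_in.
Qed.

Theorem theorem4 (R : realType) (n1 n2 : nat)
  (c1 : struct_consts R[i] n1) (c2 : struct_consts R[i] n2) :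
  is_lie_sc c1 -> is_lie_sc c2 ->
  forall (K1 K2 : seq nat) (J1 J2 : seq (seq nat)),
    JK_invariants c1 K1 J1 -> JK_invariants c2 K2 J2 ->
    JK_invariants (dsum_sc c1 c2) (K1 ++ K2) (J1 ++ J2).
Proof. by move=> _ _ K1 K2 J1 J2; apply: JK_invariants_dsum. Qed.
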